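(* Assume $\omega_\ell>0$, $\sum_\ell\omega_\ell=1$ and $\|\omega\|_\infty\sum_\ell\omega_\ell d_\ell\le c_0\sum_\ell\omega_\ell^2d_\ell$ for a constant $c_0>0$. Fix any $\alpha>0$ and $r\ge1$. Then there is a constant $C=C(c_0)$ such that with probability at least $1-n^{-r}$ the following holds: for every $m\in[n]$ with $m\le\alpha n$ and every $I,J\subseteq[n]$ with $|I|=|J|=m$, letting $I'\subseteq I$ be the set of $i\in I$ with $\sum_{j\in J}\bar A_{ij}\le\alpha\sum_\ell\omega_\ell d_\ell$, $$\|(\bar A-\mathbb E\bar A)_{I'\times J}\|_{\infty\to2}\le C\sqrt{\alpha\Big(\sum_\ell\omega_\ell^2d_\ell\Big)\,m\,r\log\Big(\frac{en}{m}\Big)}.$$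
   Context: Here $A^{(1)},\dots,A^{(L)}$ are random $n\times n$ matrices whose entries $A^{(\ell)}_{ij}\sim\mathrm{Bern}(p^{(\ell)}_{ij})$, $i,j\in[n]$, $\ell\in[L]$, are all mutually independent (no symmetry imposed). $\bar A=\sum_\ell\omega_\ell A^{(\ell)}$, $d_\ell=\max_{i,j}np^{(\ell)}_{ij}$. For a matrix $B$ and index sets $I',J$, $B_{I'\times J}$ is the submatrix with rows in $I'$ and columns in $J$; $\|B\|_{\infty\to2}=\sup_{\|x\|_\infty\le1}\|Bx\|_2$. *)

From HB Require Import structures.
From mathcomp Require Import all_boot all_order all_algebra.
From mathcomp Require Import all_classical all_reals all_analysis.
Set Implicit Arguments. Unset Strict Implicit. Unset Printing Implicit Defensive.
Import Order.TTheory GRing.Theory Num.Theory.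
Local Open Scope ring_scope.

(* Sample space: an outcome assigns to each layer l : 'I_L an n x n 0/1 matrix
   (the realisation of A^(l)). *)
Definition outcome (n L : nat) := {ffun 'I_L -> 'M[bool]_n}.

Section Defs.
Variables (R : realType) (n L : nat).
Variable p : 'I_L -> 'I_n -> 'I_n -> R.
Variable w : 'I_L -> R.

(* Probability of an outcome under the product measure of independent
   Bernoulli(p^(l)_{ij}) entries. *)
Definition weight (x : outcome n L) : R :=
  \prod_(l < L) \prod_(i < n) \prod_(j < n)
     (if x l i j then p l i j else 1 - p l i j).

Definition Prob (E : outcome n L -> Prop) : R :=
  \sum_(x : outcome n L | `[< E x >]) weight x.

Definition Expect (f : outcome n L -> R) : R :=
  \sum_(x : outcome n L) weight x * f x.

Definition Abar (x : outcome n L) : 'M[R]_n :=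
  \matrix_(i, j) \sum_(l < L) w l * (x l i j)%:R.

Definition EAbar : 'M[R]_n := \matrix_(i, j) Expect (fun x => Abar x i j).

(* d_l = max_{i,j} n p^(l)_{ij}  (the max is taken with 0 as neutral element,
   harmless since p >= 0) *)
Definition dl (l : 'I_L) : R :=
  \big[Num.max/0]_(ij : 'I_n * 'I_n) (n%:R * p l ij.1 ij.2).

Definition w_inf : R := \big[Num.max/0]_(l < L) `|w l|.
End Defs.

(* || B_{I' x J} ||_{infty -> 2} = sup_{||x||_infty <= 1} || B_{I' x J} x ||_2,
   x ranging over vectors indexed by J (coordinates outside J are irrelevant). *)
Definition norm_inf2 (R : realType) (n : nat) (B : 'M[R]_n)
    (I' J : {set 'I_n}) : R :=
  sup [set y : R | exists x : 'I_n -> R,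
        (forall j, `|x j| <= 1) /\
        y = Num.sqrt (\sum_(i in I') (\sum_(j in J) B i j * x j) ^+ 2)].

(* Write Y = Abar - E Abar, D = sum_l w_l d_l and S = sum_l w_l^2 d_l.  The
   proof is a union bound over all (m, I, J) and over all sign vectors on J:
   - the quadratic form x |-> ||Y_{I' x J} x||_2^2 is convex in each coordinate,
     so its supremum over the cube is attained at a sign vector (one of 2^m);
   - the rows of the outcome are independent, so for fixed I, J and signs the
     moment generating function of the squared norm factorises over i in I;
   - a light row i (sum_{j in J} Abar_ij <= alpha D) has a linear deviation
     bounded by 2 alpha D and variance at most alpha S; a Bernstein bound then
     gives a sub-Gaussian tail at scale sigma = 8 (1 + c0) alpha S (the Bernstein
     regime is absorbed thanks to ||w||_oo D <= c0 S), hence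
     E exp(Y_i^2 / (2 sigma)) <= e^3 by integrating the tail over levels;
   - the count C(n,m)^2 2^m e^{3m} is beaten by the threshold
     128 (1 + c0) alpha S m r log(en/m), leaving at most n^{-r-1} for each m.
   The degenerate case S = 0 forces D = 0, so light rows are exactly centred. *)

From HB Require Import structures.
From mathcomp Require Import all_boot all_order all_algebra.
From mathcomp Require Import all_classical all_reals all_analysis.
From mathcomp Require Import ring lra.
Import Order.TTheory GRing.Theory Num.Theory.
Local Open Scope ring_scope.
Set Implicit Arguments. Unset Strict Implicit. Unset Printing Implicit Defensive.

Section ElementaryBounds.
Variable R : realType.

Lemma expR_le_quad (u : R) : -1 <= u <= 1 -> expR u <= 1 + u + 2 * u ^+ 2.
Proof.
case/andP => hu1 hu2.
have [u0|u0] := leP u 0.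
  have h1 : 1 - u <= expR (- u) by have := expR_ge1Dx (- u); rewrite addrC.
  have hp : 0 < expR u := expR_gt0 u.
  have hm : expR u * expR (- u) = 1 by rewrite expRxMexpNx_1.
  have : expR u * (1 - u) <= 1.
    by rewrite -[leRHS]hm; apply: ler_wpM2l; [exact: ltW | exact: h1].
  set a := expR u => ha.
  have h3 : 0 <= - u * u ^+ 2 by rewrite mulr_ge0 ?oppr_ge0 ?sqr_ge0.
  nra.
have h1 : 1 - u / 2 <= expR (- (u / 2)).
  by have := expR_ge1Dx (- (u / 2)); rewrite addrC.
have hp : 0 < expR (u / 2) := expR_gt0 _.
have hm : expR (u / 2) * expR (- (u / 2)) = 1 by rewrite expRxMexpNx_1.
have hb : expR (u / 2) * (1 - u / 2) <= 1.
  by rewrite -[leRHS]hm; apply: ler_wpM2l; [exact: ltW | exact: h1].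
have -> : expR u = expR (u / 2) ^+ 2 by rewrite -expRM_natl; congr expR; field.
set a := expR (u / 2) in hp hb *.
have hc : 0 < 1 - u / 2 by lra.
have hd : (a * (1 - u / 2)) ^+ 2 <= 1 by rewrite expr_le1 //; apply: mulr_ge0; lra.
have he : 1 <= (1 + u + 2 * u ^+ 2) * (1 - u / 2) ^+ 2.
  have : 0 <= u ^+ 2 * (1 - u) * (5 - 2 * u).
    by apply: mulr_ge0; [apply: mulr_ge0; [exact: sqr_ge0|lra]|lra].
  move=> h; nra.
rewrite exprMn in hd.
have hf : 0 < (1 - u / 2) ^+ 2 by apply: exprn_gt0.
rewrite -(ler_pM2r hf); lra.
Qed.

(* Moment generating function of a centred Bernoulli(q) variable scaled by
   |c| <= 1: the variance-type bound E e^{c (X - q)} <= e^{2 c^2 q}. *)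
Lemma bern_mgf_le (q c : R) : 0 <= q <= 1 -> -1 <= c <= 1 ->
  q * expR (c * (1 - q)) + (1 - q) * expR (- (c * q)) <= expR (2 * c ^+ 2 * q).
Proof.
case/andP => q0 q1 /andP [c0 c1].
have h1 : expR (c * (1 - q)) <= 1 + c * (1 - q) + 2 * (c * (1 - q)) ^+ 2.
  by apply: expR_le_quad; apply/andP; split; nra.
have h2 : expR (- (c * q)) <= 1 + - (c * q) + 2 * (- (c * q)) ^+ 2.
  by apply: expR_le_quad; apply/andP; split; nra.
apply: le_trans (expR_ge1Dx _).
apply: (@le_trans _ _ (q * (1 + c * (1 - q) + 2 * (c * (1 - q)) ^+ 2) +
   (1 - q) * (1 + - (c * q) + 2 * (- (c * q)) ^+ 2))).
  by apply: lerD; apply: ler_wpM2l => //; lra.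
have : 0 <= c ^+ 2 * q * q by rewrite mulr_ge0 // mulr_ge0 // sqr_ge0.
move=> h; nra.
Qed.

Lemma bern_mgf_scaled (q a u : R) : 0 <= q <= 1 -> -1 <= a <= 1 -> 0 <= u <= 1 ->
  q * expR (a * u * (1 - q)) + (1 - q) * expR (- (a * u * q)) <= expR (2 * u ^+ 2 * q).
Proof.
move=> hq /andP [a1 a2] /andP [u0 u1]; have /andP [q0 _] := hq.
have hc : -1 <= a * u <= 1 by apply/andP; split; nra.
apply: (le_trans (bern_mgf_le hq hc)); rewrite ler_expR.
have ha2 : a ^+ 2 <= 1 by nra.
have : (a * u) ^+ 2 * q <= u ^+ 2 * q.
  apply: ler_wpM2r => //; rewrite exprMn -[leRHS]mul1r.
  by apply: ler_wpM2r => //; exact: sqr_ge0.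
lra.
Qed.

Lemma expR1_ge2 : 2 <= expR (1 : R).
Proof. by have := expR_ge1Dx (1 : R). Qed.

Lemma geometric_sum_le2 (q : R) (N : nat) : 0 <= q <= 1 / 2 ->
  \sum_(k < N) q ^+ k <= 2.
Proof.
case/andP => q0 q1; elim: N => [|N IH]; first by rewrite big_ord0; lra.
rewrite big_ord_recl expr0.
have -> : \sum_(i < N) q ^+ (bump 0 i) = q * \sum_(i < N) q ^+ i.
  by rewrite mulr_sumr; apply: eq_bigr => k _; rewrite exprS.
have : q * \sum_(i < N) q ^+ i <= 1 / 2 * 2.
  by apply: ler_pM => //; apply: sumr_ge0 => k _; exact: exprn_ge0.
lra.
Qed.

(* Layer-cake bound: e^z is at most e^{k+1} summed over the integer levels
   k <= z (only the level floor(z) is needed). *)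
Lemma expR_le_levels (z : R) (N : nat) : 0 <= z -> z < N%:R ->
  expR z <= \sum_(k < N) expR (k%:R + 1) * (k%:R <= z)%R%:R.
Proof.
move=> z0 zN.
have hk : (Num.truncn z < N)%N by rewrite truncn_lt_nat.
rewrite (bigD1 (Ordinal hk)) //= -[X in X <= _]addr0; apply: lerD.
  have /andP [h1 h2] := truncn_itv z0.
  by rewrite h1 mulr1 ler_expR; rewrite -natr1 in h2; exact: ltW.
by apply: sumr_ge0 => k _; apply: mulr_ge0; [exact: expR_ge0|exact: ler0n].
Qed.

Lemma le_sum_term (I : finType) (P : pred I) (F : I -> R) (i0 : I) :
  P i0 -> (forall i, P i -> 0 <= F i) -> F i0 <= \sum_(i | P i) F i.
Proof.
move=> h0 hF; rewrite (bigD1 i0) //= lerDl.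
by apply: sumr_ge0 => i /andP [hi _]; exact: hF.
Qed.

End ElementaryBounds.

Lemma big_pair_split (T : Type) (idx : T) (op : Monoid.com_law idx)
    (A B : finType) (F : A * B -> T) :
  \big[op/idx]_(ab : A * B) F ab = \big[op/idx]_(a : A) \big[op/idx]_(b : B) F (a, b).
Proof. by rewrite pair_bigA; apply: eq_bigr => [[a b]]. Qed.

Section Counting.
Variable R : realType.
Implicit Types n m : nat.

Lemma ln_eNm_split n m : (0 < m)%N -> (0 < n)%N ->
  ln (expR 1 * n%:R / m%:R) = 1 + ln (n%:R / m%:R) :> R.
Proof.
move=> m0 n0; rewrite -mulrA lnM ?expRK //; rewrite posrE ?expR_gt0 //.
by rewrite divr_gt0 // ltr0n.
Qed.

Lemma ln_eNm_ge1 n m : (1 <= m <= n)%N -> 1 <= ln (expR 1 * n%:R / m%:R) :> R.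
Proof.
case/andP => m1 mn; rewrite ln_eNm_split //; last exact: leq_trans mn.
by rewrite lerDl; apply: ln_ge0; rewrite ler_pdivlMr ?ltr0n // mul1r ler_nat.
Qed.

Lemma ln_le_m_ln_eNm n m : (1 <= m <= n)%N ->
  ln n%:R <= m%:R * ln (expR 1 * n%:R / m%:R) :> R.
Proof.
case/andP => m1 mn; have n0 : (0 < n)%N by exact: leq_trans mn.
rewrite ln_eNm_split // ln_div ?posrE ?ltr0n //.
have h1 : ln m%:R <= ln n%:R :> R by rewrite ler_ln ?posrE ?ltr0n // ler_nat.
have h4 : (1 : R) <= m%:R by rewrite ler1n.
have h2 : ln m%:R <= m%:R - 1 :> R.
  by have := @le_ln1Dx R (m%:R - 1); rewrite addrCA subrr addr0; apply; lra.
have h3 : 0 <= ln m%:R :> R by apply: ln_ge0.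
nra.
Qed.

Lemma binomial_le_exp n m : (1 <= m <= n)%N ->
  ('C(n, m))%:R <= expR (m%:R * ln (expR 1 * n%:R / m%:R)) :> R.
Proof.
case/andP => m1 mn; have n0 : (0 < n)%N by exact: leq_trans mn.
set x : R := m%:R / n%:R.
have x0 : 0 < x by rewrite divr_gt0 ?ltr0n.
have h1 : x ^+ m * ('C(n, m))%:R <= (x + 1) ^+ n.
  rewrite exprD1n (bigD1 (Ordinal (leq_ltn_trans mn (ltnSn n)))) //= -[leLHS]addr0.
  rewrite mulr_natr; apply: lerD => //; apply: sumr_ge0 => k _.
  by rewrite mulrn_wge0 // exprn_ge0 // ltW.
have h2 : (x + 1) ^+ n <= expR (m%:R) :> R.
  apply: (@le_trans _ _ (expR x ^+ n)).
    apply: lerXn2r; rewrite ?nnegrE ?expR_ge0 //; first by rewrite addr_ge0 // ltW.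
    by rewrite addrC expR_ge1Dx.
  by rewrite -expRM_natl /x mulrC divfK // pnatr_eq0 -lt0n.
rewrite ln_eNm_split // mulrDr mulr1 expRD.
have -> : expR (m%:R * ln (n%:R / m%:R)) = x ^-1 ^+ m.
  by rewrite expRM_natl lnK ?posrE ?divr_gt0 ?ltr0n // /x invf_div.
rewrite -(ler_pM2l (exprn_gt0 m x0)) mulrCA -exprMn mulfV ?expr1n ?mulr1.
  exact: le_trans h1 h2.
exact: lt0r_neq0.
Qed.

(* For a fixed size m, the number of choices of (I, J, signs), times the
   exponential moment of each term, is at most n^{-(r+1)}. *)
Lemma union_count_le n m (c1 alpha S r : R) :
  (1 <= m <= n)%N -> 1 <= c1 -> 0 < alpha -> 0 < S -> 1 <= r ->
  ('C(n, m))%:R * (('C(n, m))%:R * ((2 ^ m)%:R *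
    (expR (- (128 * c1 * (alpha * S * m%:R * r * ln (expR 1 * n%:R / m%:R)))
              / (2 * (8 * c1 * (alpha * S)))) * expR 3 ^+ m)))
  <= expR (- ((r + 1) * ln n%:R)).
Proof.
move=> hm c11 a0 S0 r1.
set Lm := ln (expR 1 * n%:R / m%:R).
have L1 : 1 <= Lm := ln_eNm_ge1 hm.
have hln : ln n%:R <= m%:R * Lm := ln_le_m_ln_eNm hm.
have hC := binomial_le_exp hm; rewrite -/Lm in hC.
have m1 : (1 : R) <= m%:R by rewrite ler1n; case/andP: hm.
have -> : - (128 * c1 * (alpha * S * m%:R * r * Lm)) / (2 * (8 * c1 * (alpha * S)))
   = - (8 * (m%:R * r * Lm)).
  by field; apply/andP; split; [lra | apply/andP; split; apply: lt0r_neq0 => //; lra].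
rewrite -expRM_natl.
have h2 : ((2 ^ m)%:R : R) <= expR (m%:R * 1).
  rewrite expRM_natl natrX; apply: lerXn2r; rewrite ?nnegrE ?expR_ge0 //.
  exact: expR1_ge2.
apply: (@le_trans _ _ (expR (m%:R * Lm) * (expR (m%:R * Lm) * (expR (m%:R * 1) *
   (expR (- (8 * (m%:R * r * Lm))) * expR (m%:R * 3)))))).
  by do 3!(apply: ler_pM; rewrite ?mulr_ge0 ?expR_ge0 ?ler0n //).
rewrite -!expRD ler_expR.
have : 0 <= m%:R * Lm * (r - 1) by rewrite !mulr_ge0 //; lra.
have : m%:R <= m%:R * Lm by rewrite -{1}(mulr1 m%:R) ler_wpM2l //; lra.
have : ln n%:R * (r + 1) <= m%:R * Lm * (r + 1) by rewrite ler_wpM2r //; lra.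
move=> a b c; nra.
Qed.

Lemma sum_sizes_le_powR n (r : R) :
  \sum_(m < n) expR (- ((r + 1) * ln (n%:R : R))) <= n%:R `^ (- r).
Proof.
case: n => [|n]; first by rewrite big_ord0 powR_ge0.
rewrite sumr_const card_ord /powR pnatr_eq0 /=.
set N := (n.+1%:R : R).
have hN : expR (ln N) = N by rewrite lnK // posrE ltr0n.
have e : expR (- ((r + 1) * ln N)) * N = expR (- r * ln N).
  by rewrite -{2}hN -expRD; congr expR; ring.
by rewrite -mulr_natr -/N e.
Qed.

Lemma sum_draws_const n m (c : R) :
  \sum_(I in [set I0 : {set 'I_n} | #|I0| == m]) c = ('C(n, m))%:R * c.
Proof. by rewrite sumr_const card_draws card_ord mulr_natl. Qed.

Lemma sum_powerset_const n (J : {set 'I_n}) (c : R) :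
  \sum_(K in powerset J) c = (2 ^ #|J|)%:R * c.
Proof. by rewrite sumr_const card_powerset mulr_natl. Qed.

End Counting.

Section SignVectors.
Variables (R : realType) (n : nat) (B : 'M[R]_n) (I' J : {set 'I_n}).

Definition image_sqnorm (x : 'I_n -> R) : R :=
  \sum_(i in I') (\sum_(j in J) B i j * x j) ^+ 2.

Definition set_coord (x : 'I_n -> R) (j0 : 'I_n) (u : R) : 'I_n -> R :=
  fun j => if j == j0 then u else x j.

Definition sign_vec (K : {set 'I_n}) : 'I_n -> R := fun j => if j \in K then -1 else 1.

Lemma set_coord_lin x j0 u i :
  \sum_(j in J) B i j * set_coord x j0 u j =
  \sum_(j in J) B i j * x j + (u - x j0) * \sum_(j in J) B i j * (j == j0)%:R.
Proof.
rewrite mulr_sumr -big_split; apply: eq_bigr => j _ /=; rewrite /set_coord.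
by case: eqP => [->|_]; rewrite ?mulr1 ?mulr0 ?addr0 //; ring.
Qed.

(* Convexity in one coordinate: moving x_j0 to +1 or -1 does not decrease the
   quadratic form. *)
Lemma image_sqnorm_coord_extreme x j0 : -1 <= x j0 <= 1 ->
  image_sqnorm x <=
  Num.max (image_sqnorm (set_coord x j0 1)) (image_sqnorm (set_coord x j0 (-1))).
Proof.
case/andP => t1 t2; set t := x j0 in t1 t2 *.
apply: (@le_trans _ _ ((1 + t) / 2 * image_sqnorm (set_coord x j0 1)
                      + (1 - t) / 2 * image_sqnorm (set_coord x j0 (-1)))).
  rewrite /image_sqnorm !mulr_sumr -big_split; apply: ler_sum => i _ /=.
  rewrite !set_coord_lin -/t.
  set A := \sum_(j in J) B i j * x j; set b := \sum_(j in J) B i j * (j == j0)%:R.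
  have : 0 <= b ^+ 2 * (1 - t ^+ 2) by apply: mulr_ge0; [exact: sqr_ge0 | nra].
  move=> h; nra.
set a := image_sqnorm (set_coord x j0 1); set c := image_sqnorm (set_coord x j0 (-1)).
have ha : a <= Num.max a c by rewrite le_max lexx.
have hc : c <= Num.max a c by rewrite le_max lexx orbT.
nra.
Qed.

Lemma image_sqnorm_signs_on (s : seq 'I_n) (x : 'I_n -> R) :
  (forall j, -1 <= x j <= 1) ->
  exists y : 'I_n -> R, [/\ forall j, -1 <= y j <= 1,
    forall j, j \in s -> y j = 1 \/ y j = -1 & image_sqnorm x <= image_sqnorm y].
Proof.
elim: s x => [|j0 s IH] x hx; first by exists x; split.
have [y [hy hs hF]] := IH x hx.
have hu u : -1 <= u <= 1 -> forall j, -1 <= set_coord y j0 u j <= 1.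
  by move=> hu j; rewrite /set_coord; case: eqP.
have hsu u : u = 1 \/ u = -1 ->
    forall j, j \in j0 :: s -> set_coord y j0 u j = 1 \/ set_coord y j0 u j = -1.
  by move=> hu1 j; rewrite in_cons /set_coord; case: eqP => [_ _|_ /= hj] //; exact: hs.
have hm := image_sqnorm_coord_extreme (hy j0).
have [h|h] := leP (image_sqnorm (set_coord y j0 (-1))) (image_sqnorm (set_coord y j0 1)).
  exists (set_coord y j0 1); split; [apply: hu; lra | by apply: hsu; left |].
  by apply: (le_trans hF); apply: (le_trans hm); rewrite max_l.
exists (set_coord y j0 (-1)); split; [apply: hu; lra | by apply: hsu; right |].
by apply: (le_trans hF); apply: (le_trans hm); rewrite max_r // ltW.
Qed.

Lemma image_sqnorm_le_sign_vec (x : 'I_n -> R) : (forall j, `|x j| <= 1) ->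
  exists2 K : {set 'I_n}, K \subset J & image_sqnorm x <= image_sqnorm (sign_vec K).
Proof.
move=> hx.
have hx' j : -1 <= x j <= 1 by rewrite -ler_norml.
have [y [hy hs hF]] := image_sqnorm_signs_on (enum J) hx'.
exists [set j in J | y j == -1]; first by apply/fintype.subsetP => j; rewrite inE => /andP [].
apply: (le_trans hF); rewrite le_eqVlt; apply/orP; left; apply/eqP.
apply: eq_bigr => i _; congr (_ ^+ 2); apply: eq_bigr => j hj; congr (_ * _).
rewrite /sign_vec inE hj /=.
have := hs j; rewrite mem_enum => /(_ hj) [->|->]; last by rewrite eqxx.
by rewrite ifF //; apply/eqP => h; have : (1 : R) = -1 by []; lra.
Qed.

Lemma norm_inf2_le_signs (T : R) :
  (forall K : {set 'I_n}, K \subset J -> image_sqnorm (sign_vec K) <= T) ->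
  norm_inf2 B I' J <= Num.sqrt T.
Proof.
move=> hK; apply: ge_sup.
  exists (Num.sqrt (\sum_(i in I') (\sum_(j in J) B i j * (fun _ => 0) j) ^+ 2)).
  by exists (fun _ => 0); split => // j; rewrite normr0.
move=> y [x [hx ->]].
have [K hKJ hF] := image_sqnorm_le_sign_vec hx.
rewrite ler_sqrt; last by apply: le_trans (hK K hKJ); apply: sumr_ge0 => i _; exact: sqr_ge0.
exact: le_trans hF (hK K hKJ).
Qed.

End SignVectors.

(* The outcomes of a single row: bit (l, j) is the entry A^(l)_{ij}. *)
Definition row_config (L n : nat) := {ffun 'I_L * 'I_n -> bool}.

Definition row_of (n L : nat) (x : outcome n L) (i : 'I_n) : row_config L n :=
  [ffun lj => x lj.1 i lj.2].

Definition bern (R : realType) (q : R) (b : bool) : R := if b then q else 1 - q.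

Lemma bern_ge0 (R : realType) (q : R) b : 0 <= q <= 1 -> 0 <= bern q b.
Proof. by case/andP => h0 h1; case: b => //=; rewrite subr_ge0. Qed.

Section RowDecomposition.
Variables (R : realType) (n L : nat) (p : 'I_L -> 'I_n -> 'I_n -> R).

Definition row_weight (i : 'I_n) (rho : row_config L n) : R :=
  \prod_(lj : 'I_L * 'I_n) bern (p lj.1 i lj.2) (rho lj).

Definition Erow (i : 'I_n) (F : row_config L n -> R) : R :=
  \sum_(rho : row_config L n) row_weight i rho * F rho.

Lemma weight_rows (x : outcome n L) :
  weight p x = \prod_(i < n) row_weight i (row_of x i).
Proof.
rewrite /weight exchange_big /=; apply: eq_bigr => i _.
rewrite /row_weight big_pair_split /=; apply: eq_bigr => l _; apply: eq_bigr => j _.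
by rewrite /row_of ffunE.
Qed.

Lemma Expect_prod_rows (F : 'I_n -> row_config L n -> R) :
  Expect p (fun x => \prod_(i < n) F i (row_of x i)) = \prod_(i < n) Erow i (F i).
Proof.
rewrite /Expect /Erow bigA_distr_bigA /=.
pose phi (x : outcome n L) : {ffun 'I_n -> row_config L n} := [ffun i => row_of x i].
pose psi (P : {ffun 'I_n -> row_config L n}) : outcome n L :=
  [ffun l => \matrix_(i, j) P i (l, j)].
have phiK : cancel phi psi.
  move=> x; apply/ffunP => l; apply/matrixP => i j.
  by rewrite /psi /phi !ffunE mxE ffunE /row_of ffunE.
have psiK : cancel psi phi.
  move=> P; apply/ffunP => i; rewrite /phi /psi !ffunE; apply/ffunP => [[l j]].
  by rewrite /row_of !ffunE mxE.
rewrite (reindex phi) /=; last by exists psi => ? _.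
apply: eq_bigr => x _; rewrite big_split /= weight_rows.
by congr (_ * _); apply: eq_bigr => i _; rewrite /phi ffunE.
Qed.

Lemma Erow_prod (i : 'I_n) (G : 'I_L * 'I_n -> bool -> R) :
  Erow i (fun rho => \prod_(lj : 'I_L * 'I_n) G lj (rho lj))
  = \prod_(lj : 'I_L * 'I_n)
      (p lj.1 i lj.2 * G lj true + (1 - p lj.1 i lj.2) * G lj false).
Proof.
rewrite /Erow /row_weight.
have -> : \prod_(lj : 'I_L * 'I_n)
    (p lj.1 i lj.2 * G lj true + (1 - p lj.1 i lj.2) * G lj false)
  = \prod_(lj : 'I_L * 'I_n) \sum_(b : bool) bern (p lj.1 i lj.2) b * G lj b.
  by apply: eq_bigr => lj _; rewrite big_bool /= /bern addrC.
rewrite bigA_distr_bigA; apply: eq_bigr => rho _; by rewrite big_split.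
Qed.

Lemma Erow1 (i : 'I_n) : Erow i (fun _ => 1) = 1.
Proof.
have := Erow_prod i (fun _ _ => 1); rewrite big1 // => ->.
by apply: big1 => lj _; rewrite !mulr1 addrC subrK.
Qed.

Lemma Erow_coord (i : 'I_n) (lj : 'I_L * 'I_n) :
  Erow i (fun rho => (rho lj)%:R) = p lj.1 i lj.2.
Proof.
have := Erow_prod i (fun lj' b => if lj' == lj then (b%:R : R) else 1).
rewrite (bigD1 lj) //= eqxx mulr1 mulr0 addr0 big1 ?mulr1; last first.
  by move=> k /negbTE ->; rewrite !mulr1 addrC subrK.
move=> <-; rewrite /Erow; apply: eq_bigr => rho _; congr (_ * _).
by rewrite (bigD1 lj) //= eqxx big1 ?mulr1 // => k /negbTE ->.
Qed.

Lemma Erow_sum (i : 'I_n) (I : finType) (P : pred I) (f : I -> row_config L n -> R) :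
  Erow i (fun x => \sum_(k | P k) f k x) = \sum_(k | P k) Erow i (f k).
Proof. by rewrite /Erow; under eq_bigr do rewrite mulr_sumr; rewrite exchange_big. Qed.

Lemma Erow_add (i : 'I_n) (f g : row_config L n -> R) :
  Erow i (fun x => f x + g x) = Erow i f + Erow i g.
Proof. by rewrite /Erow -big_split; apply: eq_bigr => x _; rewrite mulrDr. Qed.

Lemma Erow_scale (i : 'I_n) (f : row_config L n -> R) (a : R) :
  Erow i (fun x => a * f x) = a * Erow i f.
Proof. by rewrite /Erow mulr_sumr; apply: eq_bigr => x _; rewrite mulrCA. Qed.

Lemma Expect_sum (I : finType) (P : pred I) (f : I -> outcome n L -> R) :
  Expect p (fun x => \sum_(k | P k) f k x) = \sum_(k | P k) Expect p (f k).
Proof. by rewrite /Expect; under eq_bigr do rewrite mulr_sumr; rewrite exchange_big. Qed.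

Lemma weight_sum1 : \sum_(x : outcome n L) weight p x = 1.
Proof.
have := Expect_prod_rows (fun _ _ => 1); rewrite /Expect.
under eq_bigr do rewrite big1 ?mulr1 //.
by move=> ->; apply: big1 => i _; rewrite Erow1.
Qed.

Lemma EAbarE (w : 'I_L -> R) i j : EAbar p w i j = \sum_(l < L) w l * p l i j.
Proof.
pose F (i' : 'I_n) (rho : row_config L n) : R :=
  if i' == i then \sum_(l < L) w l * (rho (l, j))%:R else 1.
have rowF : (fun x => Abar w x i j) = (fun x => \prod_(i' < n) F i' (row_of x i')).
  apply: funext => x; rewrite (bigD1 i) //= {1}/F eqxx [X in _ * X]big1 ?mulr1.
    by rewrite mxE; apply: eq_bigr => l _; rewrite /row_of ffunE.
  by move=> k /negbTE hk; rewrite /F hk.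
rewrite /EAbar mxE rowF Expect_prod_rows (bigD1 i) //= [X in _ * X]big1 ?mulr1.
  by rewrite /F eqxx Erow_sum; apply: eq_bigr => l _; rewrite Erow_scale Erow_coord.
by move=> k /negbTE hk; rewrite /F hk Erow1.
Qed.

Hypothesis hp : forall l i j, 0 <= p l i j <= 1.

Lemma row_weight_ge0 i rho : 0 <= row_weight i rho.
Proof. by apply: prodr_ge0 => lj _; apply: bern_ge0. Qed.

Lemma weight_ge0 x : 0 <= weight p x.
Proof. by rewrite weight_rows; apply: prodr_ge0 => i _; apply: row_weight_ge0. Qed.

Lemma Erow_le i (f g : row_config L n -> R) :
  (forall x, f x <= g x) -> Erow i f <= Erow i g.
Proof. by move=> fg; apply: ler_sum => x _; apply: ler_wpM2l => //; exact: row_weight_ge0. Qed.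

Lemma Erow_ge0 i (f : row_config L n -> R) : (forall x, 0 <= f x) -> 0 <= Erow i f.
Proof. by move=> hf; apply: sumr_ge0 => x _; apply: mulr_ge0 => //; exact: row_weight_ge0. Qed.

Lemma Prob_ge_Markov (E : outcome n L -> Prop) (f : outcome n L -> R) :
  (forall x, 0 <= f x) -> (forall x, ~ E x -> 1 <= f x) ->
  1 - Expect p f <= Prob p E.
Proof.
move=> f0 f1; rewrite /Prob /Expect -{1}weight_sum1.
rewrite (bigID (fun x => `[< E x >])) /= addrAC -addrA gerDl addrC subr_le0.
apply: (@le_trans _ _ (\sum_(x | ~~ `[< E x >]) weight p x * f x)).
  apply: ler_sum => x hx; rewrite -{1}(mulr1 (weight p x)).
  apply: ler_wpM2l; first exact: weight_ge0.
  by apply: f1 => hE; move: hx; rewrite asboolT.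
rewrite [leRHS](bigID (fun x => `[< E x >])) /= lerDr.
by apply: sumr_ge0 => x _; apply: mulr_ge0 => //; apply: weight_ge0.
Qed.

End RowDecomposition.

Section RowDeviation.
Variables (R : realType) (n L : nat) (p : 'I_L -> 'I_n -> 'I_n -> R) (w : 'I_L -> R).
Hypothesis hp : forall l i j, 0 <= p l i j <= 1.
Hypothesis hw : forall l, 0 <= w l.
Variables (i : 'I_n) (J : {set 'I_n}).

Definition row_dev (s : 'I_n -> R) (rho : row_config L n) : R :=
  \sum_(j in J) s j * \sum_(l < L) w l * ((rho (l, j))%:R - p l i j).

Lemma row_dev_opp s rho : row_dev (fun j => - s j) rho = - row_dev s rho.
Proof. by rewrite /row_dev -sumrN; apply: eq_bigr => j _; rewrite mulNr. Qed.

Lemma row_dev_mgf (s : 'I_n -> R) (lam : R) :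
  (forall j, -1 <= s j <= 1) -> 0 <= lam -> (forall l, lam * w l <= 1) ->
  Erow p i (fun rho => expR (lam * row_dev s rho))
    <= expR (2 * lam ^+ 2 * \sum_(j in J) \sum_(l < L) w l ^+ 2 * p l i j).
Proof.
move=> hs hl hlw.
pose f (lj : 'I_L * 'I_n) (b : bool) : R :=
  if lj.2 \in J then s lj.2 * w lj.1 * (b%:R - p lj.1 i lj.2) else 0.
have eY rho : lam * row_dev s rho = \sum_(lj : 'I_L * 'I_n) lam * f lj (rho lj).
  rewrite -mulr_sumr; congr (_ * _); rewrite /row_dev big_pair_split /=.
  rewrite exchange_big /= [RHS](bigID (fun j => j \in J)) /=.
  rewrite [X in _ = _ + X]big1 ?addr0; last first.
    by move=> j hj; apply: big1 => l _; rewrite /f /= (negbTE hj).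
  apply: eq_bigr => j hj; rewrite mulr_sumr; apply: eq_bigr => l _.
  by rewrite /f /= hj mulrA.
under eq_fun do rewrite eY expR_sum.
rewrite (Erow_prod p i (fun lj b => expR (lam * f lj b))) mulr_sumr expR_sum.
have -> : \prod_(j in J) expR (2 * lam ^+ 2 * \sum_(l < L) w l ^+ 2 * p l i j)
  = \prod_(lj : 'I_L * 'I_n)
      expR (if lj.2 \in J then 2 * lam ^+ 2 * (w lj.1 ^+ 2 * p lj.1 i lj.2) else 0).
  rewrite big_pair_split exchange_big /= [RHS](bigID (fun j => j \in J)) /=.
  rewrite [X in _ = _ * X]big1 ?mulr1; last first.
    by move=> j hj; apply: big1 => l _; rewrite (negbTE hj) expR0.
  by apply: eq_bigr => j hj; rewrite mulr_sumr expR_sum; apply: eq_bigr => l _; rewrite hj.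
apply: ler_prod => lj _; have /andP [q0 q1] := hp lj.1 i lj.2.
apply/andP; split.
  by apply: addr_ge0; apply: mulr_ge0; rewrite ?expR_ge0 ?subr_ge0.
rewrite /f; case: ifP => hj; last by rewrite !mulr0 expR0 !mulr1 addrC subrK.
have hu : 0 <= lam * w lj.1 <= 1 by rewrite hlw andbT; exact: mulr_ge0 hl (hw _).
set q := p lj.1 i lj.2; set u := lam * w lj.1.
have -> : lam * (s lj.2 * w lj.1 * (1 - q)) = s lj.2 * u * (1 - q) by rewrite /u; ring.
have -> : lam * (s lj.2 * w lj.1 * (0 - q)) = - (s lj.2 * u * q) by rewrite /u; ring.
have -> : 2 * lam ^+ 2 * (w lj.1 ^+ 2 * q) = 2 * u ^+ 2 * q by rewrite /u; ring.
exact: bern_mgf_scaled (hp _ _ _) (hs _) hu.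
Qed.

Lemma row_dev_chernoff (s : 'I_n -> R) (lam t v : R) :
  (forall j, -1 <= s j <= 1) -> 0 <= lam -> (forall l, lam * w l <= 1) ->
  \sum_(j in J) \sum_(l < L) w l ^+ 2 * p l i j <= v ->
  Erow p i (fun rho => (t <= row_dev s rho)%R%:R)
    <= expR (- (lam * t) + 2 * lam ^+ 2 * v).
Proof.
move=> hs hl hlw hv.
apply: (@le_trans _ _
   (Erow p i (fun rho => expR (- (lam * t)) * expR (lam * row_dev s rho)))).
  apply: Erow_le => // rho; rewrite -expRD.
  case h: (t <= row_dev s rho)%R => /=; last exact: expR_ge0.
  rewrite -expR0 ler_expR addrC -mulrN -mulrDr; apply: mulr_ge0 => //.
  by rewrite subr_ge0.
rewrite Erow_scale expRD; apply: ler_wpM2l; first exact: expR_ge0.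
apply: (le_trans (row_dev_mgf hs hl hlw)); rewrite ler_expR.
by apply: ler_wpM2l => //; apply: mulr_ge0 => //; exact: sqr_ge0.
Qed.

Section BernsteinRegime.
(* W bounds the weights, v the variance of the row, M its deviation, and sigma
   dominates both the variance and the Bernstein term 2 W M. *)
Variables (W v sig M : R).
Hypothesis W_gt0 : 0 < W.
Hypothesis w_leW : forall l, w l <= W.
Hypothesis v_gt0 : 0 < v.
Hypothesis var_le_sig : 8 * v <= sig.
Hypothesis bern_le_sig : 2 * W * M <= sig.
Hypothesis var_le : \sum_(j in J) \sum_(l < L) w l ^+ 2 * p l i j <= v.

Lemma row_dev_tail (s : 'I_n -> R) (t : R) :
  (forall j, -1 <= s j <= 1) -> 0 <= t <= M ->
  Erow p i (fun rho => (t <= row_dev s rho)%R%:R) <= expR (- (t ^+ 2 / sig)).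
Proof.
move=> hs /andP [t0 tM].
have W0 := W_gt0; have v0 := v_gt0; have h8 := var_le_sig; have h2 := bern_le_sig.
have sig_gt0 : 0 < sig by lra.
have [htW|htW] := leP (t * W) (4 * v).
  pose lam := t / (4 * v).
  have hl : 0 <= lam by rewrite /lam divr_ge0 //; lra.
  have hlw l : lam * w l <= 1.
    rewrite /lam mulrAC ler_pdivrMr; last lra.
    by rewrite mul1r; apply: le_trans htW; apply: ler_wpM2l.
  apply: (le_trans (row_dev_chernoff t hs hl hlw var_le)); rewrite ler_expR.
  have -> : - (lam * t) + 2 * lam ^+ 2 * v = - (t ^+ 2 / (8 * v)).
    by rewrite /lam; field; lra.
  rewrite lerN2; apply: ler_wpM2l; first exact: sqr_ge0.
  by rewrite lef_pV2 ?posrE //; lra.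
pose lam := W^-1.
have hl : 0 <= lam by rewrite /lam invr_ge0 ltW.
have hlw l : lam * w l <= 1 by rewrite /lam mulrC ler_pdivrMr // mul1r.
apply: (le_trans (row_dev_chernoff t hs hl hlw var_le)); rewrite ler_expR.
have e1 : - (lam * t) + 2 * lam ^+ 2 * v <= - (t / (2 * W)).
  have : 2 * v / W ^+ 2 <= t / (2 * W).
    rewrite ler_pdivrMr ?exprn_gt0 // mulrAC ler_pdivlMr; last lra.
    have : 4 * v * W <= t * W * W by apply: ler_wpM2r; lra.
    by move=> h; rewrite expr2; lra.
  have -> : 2 * lam ^+ 2 * v = 2 * v / W ^+ 2 by rewrite /lam exprVn; ring.
  have -> : lam * t = t / (2 * W) + t / (2 * W).
    by rewrite /lam; field; apply: lt0r_neq0.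
  lra.
apply: (le_trans e1); rewrite lerN2.
rewrite ler_pdivrMr // mulrAC ler_pdivlMr; last lra.
by rewrite expr2 -mulrA; apply: ler_wpM2l => //; nra.
Qed.

Hypothesis M_ge0 : 0 <= M.
Variable light : row_config L n -> bool.
Hypothesis light_dev_le : forall (s : 'I_n -> R) rho,
  (forall j, -1 <= s j <= 1) -> light rho -> `|row_dev s rho| <= M.

Definition level (s : 'I_n -> R) (rho : row_config L n) : R :=
  (if light rho then row_dev s rho ^+ 2 else 0) / (2 * sig).

Lemma row_dev_level_tail (s : 'I_n -> R) (k : nat) : (forall j, -1 <= s j <= 1) ->
  Erow p i (fun rho => (k%:R <= level s rho)%R%:R) <= 2 * expR (- (2 * k%:R)).
Proof.
move=> hs; have sig_gt0 : 0 < sig by apply: lt_le_trans var_le_sig; rewrite mulr_gt0.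
have hs' j : -1 <= - s j <= 1 by have /andP [a b] := hs j; apply/andP; split; lra.
set t := Num.sqrt (2 * sig * k%:R).
have t0 : 0 <= t by exact: sqrtr_ge0.
have tt : t ^+ 2 = 2 * sig * k%:R by rewrite sqr_sqrtr // mulr_ge0 //; lra.
have hlev rho : (k%:R <= level s rho)%R -> t <= `|row_dev s rho| /\ (0 < t -> light rho).
  rewrite /level; case: (light rho); last first.
    rewrite mul0r => hk0.
    have -> : t = 0.
      by rewrite /t (_ : k%:R = 0) ?mulr0 ?sqrtr0 //; apply/eqP; rewrite eq_le hk0 ler0n.
    by split; [exact: normr_ge0 | rewrite ltxx].
  rewrite ler_pdivlMr; last lra.
  rewrite -real_normK ?num_real // => hy; split => //.
  by rewrite -(@ler_pXn2r _ 2) ?nnegrE // tt mulrC.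
have [tM|tM] := leP t M; last first.
  apply: (@le_trans _ _ 0); last by rewrite mulr_ge0 ?expR_ge0.
  apply: (@le_trans _ _ (Erow p i (fun _ => 0))); last first.
    by rewrite /Erow big1 // => x _; rewrite mulr0.
  apply: Erow_le => // rho; case hk: (k%:R <= level s rho)%R => //=.
  have [ht hl] := hlev rho hk.
  by have := light_dev_le hs (hl (le_lt_trans M_ge0 tM)); lra.
apply: (@le_trans _ _ (Erow p i (fun rho => (t <= row_dev s rho)%R%:R
                                 + (t <= row_dev (fun j => - s j) rho)%R%:R))).
  apply: Erow_le => // rho; rewrite row_dev_opp.
  case hk: (k%:R <= level s rho)%R; last by apply: addr_ge0; exact: ler0n.
  have [+ _] := hlev rho hk; rewrite ler_normr => /orP [->|h].
    by rewrite /= lerDl ler0n.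
  by rewrite h /= lerDr ler0n.
have ht : 0 <= t <= M by rewrite t0 tM.
rewrite Erow_add.
have -> : expR (- (2 * k%:R)) = expR (- (t ^+ 2 / sig)).
  by congr expR; rewrite tt; field; apply: lt0r_neq0.
by have := row_dev_tail hs ht; have := row_dev_tail hs' ht; lra.
Qed.

Lemma row_dev_sq_mgf (s : 'I_n -> R) : (forall j, -1 <= s j <= 1) ->
  Erow p i (fun rho => expR (level s rho)) <= expR 3.
Proof.
move=> hs; have sig_gt0 : 0 < sig by apply: lt_le_trans var_le_sig; rewrite mulr_gt0.
have lev0 rho : 0 <= level s rho.
  by rewrite /level; apply: divr_ge0; [case: (light rho); rewrite ?sqr_ge0 | lra].
set N := (Num.truncn (M ^+ 2 / (2 * sig))).+1.
have levN rho : level s rho < N%:R.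
  have : 0 <= M ^+ 2 / (2 * sig) by rewrite divr_ge0 ?sqr_ge0 //; lra.
  move/truncn_itv => /andP [_]; apply: le_lt_trans.
  rewrite /level ler_pM2r ?invr_gt0; last lra.
  case h: (light rho); last exact: sqr_ge0.
  by rewrite -real_normK ?num_real // lerXn2r ?nnegrE ?light_dev_le.
apply: (@le_trans _ _
   (Erow p i (fun rho => \sum_(k < N) expR (k%:R + 1) * (k%:R <= level s rho)%R%:R))).
  by apply: Erow_le => // rho; apply: expR_le_levels.
rewrite Erow_sum.
apply: (@le_trans _ _ (\sum_(k < N) 2 * expR 1 * expR (-1) ^+ k)).
  apply: ler_sum => k _; rewrite Erow_scale.
  have -> : 2 * expR 1 * expR (-1) ^+ k = expR (k%:R + 1) * (2 * expR (- (2 * k%:R))) :> R.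
    rewrite -expRM_natl mulrCA -expRD -mulrA -expRD; congr (_ * expR _); lra.
  by apply: ler_wpM2l; [exact: expR_ge0 | exact: row_dev_level_tail].
rewrite -mulr_sumr.
have e2 := expR1_ge2 R.
have q12 : 0 <= expR (-1 : R) <= 1 / 2.
  rewrite expR_ge0 /= expRN.
  have : (expR (1:R))^-1 <= 2^-1 by rewrite lef_pV2 ?posrE ?expR_gt0.
  lra.
apply: (@le_trans _ _ (2 * expR 1 * 2)).
  by apply: ler_wpM2l; [rewrite mulr_ge0 ?expR_ge0 | exact: geometric_sum_le2].
have -> : (3 : R) = 1 + 1 + 1 by lra.
rewrite !expRD; have h1 : 0 <= expR (1 : R) by exact: expR_ge0.
nra.
Qed.

End BernsteinRegime.
End RowDeviation.

Section Model.
Variables (R : realType) (n L : nat) (p : 'I_L -> 'I_n -> 'I_n -> R) (w : 'I_L -> R).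

Definition wdeg : R := \sum_(l < L) w l * dl p l.
Definition wvar : R := \sum_(l < L) w l ^+ 2 * dl p l.

Definition light_row (J : {set 'I_n}) (a : R) (rho : row_config L n) : bool :=
  \sum_(j in J) \sum_(l < L) w l * (rho (l, j))%:R <= a.

Definition light_sq_dev (a : R) (J K : {set 'I_n}) (i : 'I_n) (rho : row_config L n) : R :=
  if light_row J a rho then row_dev p w i J (sign_vec R K) rho ^+ 2 else 0.

Lemma dl_ge l i j : n%:R * p l i j <= dl p l.
Proof. exact: (le_bigmax _ (fun ij : 'I_n * 'I_n => n%:R * p l ij.1 ij.2) (i, j)). Qed.

Lemma dl_ge0 l : 0 <= dl p l.
Proof. exact: bigmax_ge_id. Qed.

Lemma w_le_inf l : w l <= w_inf w.
Proof. exact: le_trans (ler_norm (w l)) (le_bigmax _ (fun l => `|w l|) l). Qed.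

Lemma wvar_ge0 : 0 <= wvar.
Proof. by apply: sumr_ge0 => l _; apply: mulr_ge0; [exact: sqr_ge0 | exact: dl_ge0]. Qed.

Lemma wdeg_eq0 : (forall l, 0 < w l) -> wvar = 0 -> wdeg = 0.
Proof.
move=> hw S0; apply: big1 => l _.
have hnn l' : true -> 0 <= w l' ^+ 2 * dl p l'.
  by move=> _; apply: mulr_ge0; [exact: sqr_ge0 | exact: dl_ge0].
have /eqP : w l ^+ 2 * dl p l = 0 by apply: (psumr_eq0P hnn S0).
by rewrite mulf_eq0 sqrf_eq0 (gt_eqF (hw l)) /= => /eqP ->; rewrite mulr0.
Qed.

Lemma centered_entry (x : outcome n L) i j :
  (Abar w x - EAbar p w) i j = \sum_(l < L) w l * ((x l i j)%:R - p l i j).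
Proof.
have -> : (Abar w x - EAbar p w) i j = Abar w x i j - EAbar p w i j by rewrite !mxE.
by rewrite EAbarE mxE -sumrB; apply: eq_bigr => l _; rewrite mulrBr.
Qed.

Lemma image_sqnorm_rows (a : R) (I J K : {set 'I_n}) (x : outcome n L) :
  image_sqnorm (Abar w x - EAbar p w) [set i in I | \sum_(j in J) Abar w x i j <= a] J
    (sign_vec R K)
  = \sum_(i in I) light_sq_dev a J K i (row_of x i).
Proof.
rewrite /image_sqnorm big_mkcond [RHS]big_mkcond; apply: eq_bigr => i _.
rewrite inE; case: (i \in I) => //=; rewrite /light_sq_dev /light_row.
have -> : \sum_(j in J) Abar w x i j = \sum_(j in J) \sum_(l < L) w l * (row_of x i (l, j))%:R.
  by apply: eq_bigr => j _; rewrite mxE; apply: eq_bigr => l _; rewrite /row_of ffunE.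
case: ifP => // _; congr (_ ^+ 2); apply: eq_bigr => j _.
rewrite mulrC centered_entry; congr (_ * _); apply: eq_bigr => l _.
by rewrite /row_of ffunE.
Qed.

Hypothesis hp : forall l i j, 0 <= p l i j <= 1.
Hypothesis hw : forall l, 0 <= w l.

Lemma wdeg_ge0 : 0 <= wdeg.
Proof. by apply: sumr_ge0 => l _; apply: mulr_ge0 => //; exact: dl_ge0. Qed.

Lemma expected_degree_le (c : 'I_L -> R) (J : {set 'I_n}) (alpha : R) i :
  (0 < n)%N -> (forall l, 0 <= c l) -> #|J|%:R <= alpha * n%:R ->
  \sum_(j in J) \sum_(l < L) c l * p l i j <= alpha * \sum_(l < L) c l * dl p l.
Proof.
move=> n0 hc hJ.
set s := \sum_(l < L) c l * dl p l.
have s0 : 0 <= s by apply: sumr_ge0 => l _; apply: mulr_ge0 => //; exact: dl_ge0.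
have h1 j : \sum_(l < L) c l * p l i j <= s / n%:R.
  rewrite mulr_suml; apply: ler_sum => l _; rewrite -mulrA; apply: ler_wpM2l => //.
  by rewrite ler_pdivlMr ?ltr0n // mulrC dl_ge.
apply: (le_trans (ler_sum _ (fun j _ => h1 j))).
rewrite sumr_const -[_ *+ #|J|]mulr_natr.
have hq : #|J|%:R / n%:R <= alpha by rewrite ler_pdivrMr ?ltr0n.
have : 0 <= s * (alpha - #|J|%:R / n%:R) by rewrite mulr_ge0 // subr_ge0.
have -> : s / n%:R * #|J|%:R = s * (#|J|%:R / n%:R) by ring.
move=> h; nra.
Qed.

Lemma light_row_dev_le (J : {set 'I_n}) (alpha : R) (s : 'I_n -> R) i rho :
  (0 < n)%N -> #|J|%:R <= alpha * n%:R -> (forall j, -1 <= s j <= 1) ->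
  light_row J (alpha * wdeg) rho -> `|row_dev p w i J s rho| <= 2 * alpha * wdeg.
Proof.
move=> n0 hJ hs hlight.
have deg_ge0 j : 0 <= \sum_(l < L) w l * (rho (l, j))%:R.
  by apply: sumr_ge0 => l _; apply: mulr_ge0 => //; exact: ler0n.
have mean_ge0 j : 0 <= \sum_(l < L) w l * p l i j.
  by apply: sumr_ge0 => l _; apply: mulr_ge0 => //; case/andP: (hp l i j).
apply: (le_trans (ler_norm_sum _ _ _)).
apply: (@le_trans _ _ (\sum_(j in J) (\sum_(l < L) w l * (rho (l, j))%:R
     + \sum_(l < L) w l * p l i j))).
  apply: ler_sum => j _; rewrite normrM -[leRHS]mul1r.
  apply: ler_pM; [exact: normr_ge0 | exact: normr_ge0 | by rewrite ler_norml | ].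
  have -> : \sum_(l < L) w l * ((rho (l, j))%:R - p l i j)
      = \sum_(l < L) w l * (rho (l, j))%:R - \sum_(l < L) w l * p l i j.
    by rewrite -sumrB; apply: eq_bigr => l _; rewrite mulrBr.
  apply: (le_trans (ler_normB _ _)).
  by rewrite !ger0_norm.
rewrite big_split /=.
have := expected_degree_le i n0 hw hJ.
by move: hlight; rewrite /light_row -/wdeg; lra.
Qed.

Lemma Expect_exp_light_sq (I J K : {set 'I_n}) (a W v sig M T : R) :
  0 < W -> (forall l, w l <= W) -> 0 < v ->
  8 * v <= sig -> 2 * W * M <= sig -> 0 <= M ->
  (forall i, \sum_(j in J) \sum_(l < L) w l ^+ 2 * p l i j <= v) ->
  (forall (s : 'I_n -> R) i rho, (forall j, -1 <= s j <= 1) ->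
     light_row J a rho -> `|row_dev p w i J s rho| <= M) ->
  Expect p (fun x => expR ((\sum_(i in I) light_sq_dev a J K i (row_of x i) - T) / (2 * sig)))
   <= expR (- T / (2 * sig)) * expR 3 ^+ #|I|.
Proof.
move=> hW hwW hv h8 h2 hM hV hlt.
pose F (i : 'I_n) (rho : row_config L n) : R :=
  if i \in I then expR (light_sq_dev a J K i rho / (2 * sig)) else 1.
have eF x : expR ((\sum_(i in I) light_sq_dev a J K i (row_of x i) - T) / (2 * sig))
    = expR (- T / (2 * sig)) * \prod_(i < n) F i (row_of x i).
  rewrite -big_mkcond /= -expR_sum -expRD; congr expR.
  by rewrite -mulr_suml mulrBl addrC mulNr.
rewrite /Expect; under eq_bigr do rewrite eF mulrCA.
rewrite -mulr_sumr; apply: ler_wpM2l; first exact: expR_ge0.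
rewrite -/(Expect p _) Expect_prod_rows -prodr_const [leRHS]big_mkcond /=.
apply: ler_prod => i _; apply/andP; split.
  by apply: Erow_ge0 => // rho; rewrite /F; case: (i \in I); rewrite ?expR_ge0.
rewrite /F; case: (i \in I); last by rewrite Erow1.
apply: (row_dev_sq_mgf hp hw (W := W) (v := v) (sig := sig) (M := M)) => //.
- by move=> s' rho hs'; exact: hlt.
- by move=> j; rewrite /sign_vec; case: (j \in K); lra.
Qed.

End Model.

Definition bounded_event (R : realType) (n L : nat) (p : 'I_L -> 'I_n -> 'I_n -> R)
    (w : 'I_L -> R) (alpha C r : R) (x : outcome n L) : Prop :=
  forall (m : nat), (1 <= m <= n)%N -> m%:R <= alpha * n%:R ->
  forall I J : {set 'I_n}, #|I| = m -> #|J| = m ->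
  let I' := [set i in I |
              \sum_(j in J) Abar w x i j <= alpha * \sum_(l < L) w l * dl p l] in
  norm_inf2 (Abar w x - EAbar p w) I' J
    <= C * Num.sqrt (alpha * (\sum_(l < L) w l ^+ 2 * dl p l) * m%:R * r
                     * ln (expR 1 * n%:R / m%:R)).

(* Degenerate case S = 0: then D = 0 and light rows are exactly centred, so the
   bound holds for every outcome. *)
Lemma bounded_event_degenerate (R : realType) (n L : nat)
    (p : 'I_L -> 'I_n -> 'I_n -> R) (w : 'I_L -> R) (alpha C r : R) x :
  (forall l i j, 0 <= p l i j <= 1) -> (forall l, 0 < w l) -> wvar p w = 0 ->
  bounded_event p w alpha C r x.
Proof.
move=> hp hw S0 m /andP [m1 mn] hma I J hI hJ /=.
have n0 : (0 < n)%N by exact: leq_trans m1 mn.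
have hJa : #|J|%:R <= alpha * n%:R by rewrite hJ.
have hw0 l : 0 <= w l by exact: ltW.
rewrite -/(wvar p w) S0 mulr0 !mul0r sqrtr0 mulr0 -[X in _ <= X]sqrtr0.
apply: norm_inf2_le_signs => K _; rewrite image_sqnorm_rows le_eqVlt; apply/orP; left.
apply/eqP; apply: big1 => i _; rewrite /light_sq_dev; case: ifP => // hlight.
apply/eqP; rewrite sqrf_eq0 -normr_le0.
have hs j : -1 <= sign_vec R K j <= 1 by rewrite /sign_vec; case: (j \in K); lra.
have := light_row_dev_le hp hw0 i n0 hJa hs hlight.
by rewrite (wdeg_eq0 hw S0) !mulr0.
Qed.

Section UnionBound.
Variables (R : realType) (n L : nat) (p : 'I_L -> 'I_n -> 'I_n -> R) (w : 'I_L -> R).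
Variables (alpha r c1 : R).
Hypothesis hp : forall l i j, 0 <= p l i j <= 1.
Hypothesis hw : forall l, 0 <= w l.
Hypothesis c1_ge1 : 1 <= c1.
Hypothesis bernstein_dominated : w_inf w * wdeg p w <= c1 * wvar p w.
Hypothesis wvar_gt0 : 0 < wvar p w.
Hypothesis alpha_gt0 : 0 < alpha.
Hypothesis r_ge1 : 1 <= r.

(* Scale of the sub-Gaussian tail of a light row, and the level that the
   squared norm may reach for sets of size m. *)
Definition tail_scale : R := 8 * c1 * (alpha * wvar p w).
Definition threshold (m : nat) : R :=
  128 * c1 * (alpha * wvar p w * m%:R * r * ln (expR 1 * n%:R / m%:R)).

(* Exponential weight of all the ways to violate the bound: a sum over sizes
   m, sets I and J of size m, and sign patterns K on J. *)
Definition union_weight (x : outcome n L) : R :=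
  \sum_(m < n | (m.+1%:R <= alpha * n%:R)%R)
   \sum_(I in [set I0 : {set 'I_n} | #|I0| == m.+1])
   \sum_(J in [set J0 : {set 'I_n} | #|J0| == m.+1])
   \sum_(K in powerset J)
     expR ((\sum_(i in I) light_sq_dev p w (alpha * wdeg p w) J K i (row_of x i)
            - threshold m.+1) / (2 * tail_scale)).

Lemma union_weight_ge0 x : 0 <= union_weight x.
Proof. by do 4!(apply: sumr_ge0 => ? _); exact: expR_ge0. Qed.

(* Markov's inequality applies: a violation makes one term exceed 1. *)
Lemma union_weight_ge1 x :
  ~ bounded_event p w alpha (Num.sqrt (128 * c1)) r x -> 1 <= union_weight x.
Proof.
move=> violated; rewrite leNgt; apply/negP => small; apply: violated.
have c1_pos : 0 < c1 by apply: lt_le_trans c1_ge1.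
have scale_gt0 : 0 < tail_scale by rewrite !mulr_gt0.
move=> [//|m] /andP [_ hmn] hma I J hI hJ /=.
rewrite -sqrtrM; last by rewrite mulr_ge0 // ltW.
apply: norm_inf2_le_signs => K hK; rewrite image_sqnorm_rows leNgt; apply/negP => hT.
pose violation_term := (fun (m' : 'I_n) (I0 J0 K0 : {set 'I_n}) =>
  expR ((\sum_(i in I0) light_sq_dev p w (alpha * wdeg p w) J0 K0 i (row_of x i)
         - threshold m'.+1) / (2 * tail_scale))).
have big : violation_term (Ordinal hmn) I J K <= union_weight x.
  apply: le_trans (le_sum_term (i0 := Ordinal hmn) hma _); last first.
    by move=> *; do 3!(apply: sumr_ge0 => ? _); exact: expR_ge0.
  apply: le_trans (le_sum_term (i0 := I) _ _); last 2 first.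
  - by rewrite inE hI.
  - by move=> *; do 2!(apply: sumr_ge0 => ? _); exact: expR_ge0.
  apply: le_trans (le_sum_term (i0 := J) _ _); last 2 first.
  - by rewrite inE hJ.
  - by move=> *; apply: sumr_ge0 => ? _; exact: expR_ge0.
  by apply: le_sum_term; rewrite ?powersetE // => *; exact: expR_ge0.
have : 1 < violation_term (Ordinal hmn) I J K.
  by rewrite expR_gt1 divr_gt0 ?subr_gt0 ?mulr_gt0.
by move: small big; lra.
Qed.

Lemma Expect_size_term (m : 'I_n) : (m.+1%:R <= alpha * n%:R)%R ->
  \sum_(I in [set I0 : {set 'I_n} | #|I0| == m.+1])
  \sum_(J in [set J0 : {set 'I_n} | #|J0| == m.+1])
  \sum_(K in powerset J)
    Expect p (fun x => expR ((\sum_(i in I) light_sq_dev p w (alpha * wdeg p w) J K i (row_of x i)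
                               - threshold m.+1) / (2 * tail_scale)))
  <= ('C(n, m.+1))%:R * (('C(n, m.+1))%:R * ((2 ^ m.+1)%:R *
       (expR (- threshold m.+1 / (2 * tail_scale)) * expR 3 ^+ m.+1))).
Proof.
move=> hma; have c1_pos : 0 < c1 by apply: lt_le_trans c1_ge1.
have a0 := alpha_gt0; have n0 : (0 < n)%N by exact: leq_ltn_trans (leq0n m) (ltn_ord m).
have W0 : 0 < w_inf w.
  have W_ge0 : 0 <= w_inf w by exact: bigmax_ge_id.
  rewrite lt_def W_ge0 andbT; apply/eqP => W_eq0.
  move: wvar_gt0; rewrite /wvar big1 ?ltxx // => l _.
  have wl0 : w l = 0 by apply/eqP; rewrite eq_le hw andbT -W_eq0 w_le_inf.
  by rewrite wl0 expr0n mul0r.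
rewrite -sum_draws_const; apply: ler_sum => I; rewrite inE => /eqP hI.
rewrite -sum_draws_const; apply: ler_sum => J; rewrite inE => /eqP hJ.
have hJa : #|J|%:R <= alpha * n%:R by rewrite hJ.
rewrite -hJ -sum_powerset_const hJ -hI; apply: ler_sum => K _.
apply: (@Expect_exp_light_sq _ _ _ p w hp hw I J K _ (w_inf w) (alpha * wvar p w) _
          (2 * alpha * wdeg p w)) => //.
- exact: w_le_inf.
- exact: mulr_gt0.
- rewrite /tail_scale; apply: ler_wpM2r; first by rewrite mulr_ge0 // ltW.
  by have := c1_ge1; lra.
- have h1 : alpha * (w_inf w * wdeg p w) <= alpha * (c1 * wvar p w).
    by rewrite ler_pM2l // bernstein_dominated.
  have h2 : 0 <= alpha * (c1 * wvar p w) by rewrite !mulr_ge0 // ltW.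
  by rewrite /tail_scale; lra.
- by rewrite !mulr_ge0 ?wdeg_ge0 // ltW.
- by move=> i; apply: expected_degree_le => // l; exact: sqr_ge0.
- by move=> s i rho hs; apply: light_row_dev_le.
Qed.

Lemma Expect_union_weight_le : Expect p union_weight <= n%:R `^ (- r).
Proof.
apply: le_trans (sum_sizes_le_powR n r).
rewrite Expect_sum [leRHS](bigID (fun m : 'I_n => (m.+1%:R <= alpha * n%:R)%R)) /=.
apply: ler_wpDr; first by apply: sumr_ge0 => ? _; exact: expR_ge0.
apply: ler_sum => m hma.
have hm : (1 <= m.+1 <= n)%N by rewrite ltn_ord.
apply: le_trans (union_count_le hm c1_ge1 alpha_gt0 wvar_gt0 r_ge1).
rewrite Expect_sum; under eq_bigr do rewrite Expect_sum.
under eq_bigr do under eq_bigr do rewrite Expect_sum.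
exact: Expect_size_term.
Qed.

Lemma bounded_event_prob :
  1 - n%:R `^ (- r) <= Prob p (bounded_event p w alpha (Num.sqrt (128 * c1)) r).
Proof.
apply: le_trans (Prob_ge_Markov hp union_weight_ge0 union_weight_ge1).
by rewrite lerD2l lerN2 Expect_union_weight_le.
Qed.

End UnionBound.

Unset Implicit Arguments.

Theorem mainTheorem12 (R : realType) (c0 : R) (hc0 : 0 < c0) :
  exists C : R, 0 < C /\
  forall (n L : nat) (p : 'I_L -> 'I_n -> 'I_n -> R) (w : 'I_L -> R)
         (alpha r : R),
    (forall l i j, 0 <= p l i j <= 1) ->
    (forall l, 0 < w l) ->
    \sum_(l < L) w l = 1 ->
    w_inf w * \sum_(l < L) w l * dl p l
      <= c0 * \sum_(l < L) w l ^+ 2 * dl p l ->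
    0 < alpha -> 1 <= r ->
    Prob p (fun x =>
      forall (m : nat), (1 <= m <= n)%N -> m%:R <= alpha * n%:R ->
      forall I J : {set 'I_n}, #|I| = m -> #|J| = m ->
      let I' := [set i in I |
                  \sum_(j in J) Abar w x i j <= alpha * \sum_(l < L) w l * dl p l] in
      norm_inf2 (Abar w x - EAbar p w) I' J
        <= C * Num.sqrt (alpha * (\sum_(l < L) w l ^+ 2 * dl p l) * m%:R * r
                         * ln (expR 1 * n%:R / m%:R)))
    >= 1 - n%:R `^ (- r).
Proof.
exists (Num.sqrt (128 * (1 + c0))); split; first by rewrite sqrtr_gt0; lra.
move=> n L p w alpha r hp hw _ hc alpha_gt0 r_ge1.
have [S0|S_neq0] := eqVneq (wvar p w) 0.
  apply: le_trans (Prob_ge_Markov hp (f := fun _ => 0) (fun _ => lexx 0) _).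
    by rewrite /Expect big1 => [|x _]; rewrite ?mulr0 // subr0 lerBlDr lerDl powR_ge0.
  by move=> x []; apply: bounded_event_degenerate.
have S_gt0 : 0 < wvar p w by rewrite lt_def S_neq0 wvar_ge0.
apply: (@bounded_event_prob _ _ _ p w alpha r (1 + c0)) => //.
- by move=> l; exact: ltW.
- lra.
- by apply: le_trans hc _; apply: ler_wpM2r; [exact: wvar_ge0 | lra].
Qed.
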